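(* Let $M_i = \{ j\cdot 2^{-i} \mid j \in \{0,\dots,2^i\}\}$, let $\widehat{\mathsf{M}}=\prod_{i\in\mathbb{N}}\mathsf{M}_i$ be the product of the finite discrete spaces $\mathsf{M}_i$ on $M_i$, and let $\mathsf{M}$ be the subspace of $\ell_1$ with underlying set $\{x \in \prod_i M_i : \sum_i |x(i)|<\infty\}$. Let $\mathbb{F}$ be the countable fan and $\mathsf{2}$ the discrete space $\{\mathtt{0},\mathtt{1}\}$. Define $f\colon \widehat{\mathsf{M}}\times\mathbb{N}\times\mathbb{N}^2\to\mathsf{2}$ by $f(x,k,a,b)=\mathtt{0}$ if $\sum_{i=a}^{a+b}x(i)\le 2^{-k}$ and $f(x,k,a,b)=\mathtt{1}$ otherwise, and define $g\colon\mathsf{M}\to\mathsf{2}^{\mathbb{N}\times\mathbb{F}}$ by $g(y)(k,a,b)=f(y,k,a,b)$ and $g(y)(k,\infty,\infty)=\mathtt{0}$ for $y\in\mathsf{M}$, $k,a,b\in\mathbb{N}$. Then for every $y\in\mathsf{M}$ the function $g(y)\colon\mathbb{N}\times\mathbb{F}\to\mathsf{2}$ is continuous, and moreover $f$ and $g$ are continuous.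
   Context: $\ell_1$ is the set of real sequences $x$ with $\|x\|_1=\sum_i|x(i)|<\infty$, with the metric $\|x-y\|_1$; $\mathsf{M}$ has the subspace topology. $\mathbb{N}$ and $\mathbb{N}^2$ are discrete. The countable fan $\mathbb{F}$ has underlying set $\mathbb{N}^2\cup\{(\infty,\infty)\}$ and the metric $d$ with $d((a,b),(\infty,\infty))=2^{-a}$ and $d((a,b),(a',b'))=\max\{2^{-a},2^{-a'}\}$ for distinct $(a,b),(a',b')\in\mathbb{N}^2$. Products and function spaces are formed in the cartesian closed category QCB of quotients of countably based spaces: the product carries the sequentialisation of the product topology, and $\mathsf{2}^{\mathbb{N}\times\mathbb{F}}$ is the set of continuous maps $\mathbb{N}\times\mathbb{F}\to\mathsf{2}$ with the sequentialisation of the compact-open topology. *)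

From HB Require Import structures.
From mathcomp Require Import all_boot all_order all_algebra.
From mathcomp Require Import all_classical all_reals all_analysis.
Set Implicit Arguments. Unset Strict Implicit. Unset Printing Implicit Defensive.
Import Order.TTheory GRing.Theory Num.Theory.
Local Open Scope classical_set_scope.
Local Open Scope ring_scope.

(* A "space" is a carrier set A : set T together with a family O of open
   subsets of A. *)

Definition generated {T : Type} (A : set T) (B : set (set T)) : set (set T) :=
  fun U => U `<=` A /\
    forall x, U x -> exists s : seq (set T),
      (forall V, V \in s -> B V /\ V x) /\
      (forall z, A z -> (forall V, V \in s -> V z) -> U z).

Definition discrete {T : Type} (A : set T) : set (set T) := fun U => U `<=` A.

Definition metric_top {R : realType} {T : Type} (A : set T) (d : T -> T -> R)
  : set (set T) :=
  fun U => U `<=` A /\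
    forall x, U x -> exists2 e : R, 0 < e &
      forall z, A z -> d x z < e -> U z.

Definition prod_top {S T : Type} (A : set S) (OA : set (set S))
  (B : set T) (OB : set (set T)) : set (set (S * T)) :=
  generated (A `*` B) [set U `*` V | U in OA & V in OB].

Definition converges {T : Type} (O : set (set T)) (u : nat -> T) (p : T) :=
  forall U, O U -> U p -> exists N, forall n, (N <= n)%N -> U (u n).

Definition seqz {T : Type} (A : set T) (O : set (set T)) : set (set T) :=
  fun U => U `<=` A /\
    forall (u : nat -> T) p, (forall n, A (u n)) -> A p ->
      converges O u p -> U p -> exists N, forall n, (N <= n)%N -> U (u n).

Definition cont {S T : Type} (A : set S) (OA : set (set S))
  (B : set T) (OB : set (set T)) (h : S -> T) :=
  (forall x, A x -> B (h x)) /\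
  (forall V, OB V -> OA (A `&` (h @^-1` V))).

Definition compact_in {T : Type} (A : set T) (O : set (set T)) (K : set T) :=
  K `<=` A /\
  forall C : set (set T), (forall U, C U -> O U) ->
    (forall x, K x -> exists2 U, C U & U x) ->
    exists s : seq (set T), (forall U, U \in s -> C U) /\
      (forall x, K x -> exists2 U, U \in s & U x).

Definition compact_open {S T : Type} (A : set S) (OA : set (set S))
  (B : set T) (OB : set (set T)) : set (set (S -> T)) :=
  generated (cont A OA B OB)
    [set W | exists K V, compact_in A OA K /\ OB V /\
              W = [set h | forall z, K z -> V (h z)]].

Section Spaces.
Variable R : realType.

Definition Mi (i : nat) : set R :=
  [set r | exists2 j : nat, (j <= 2 ^ i)%N & r = j%:R * (2 ^- i)].

Definition Mhat : set (nat -> R) := [set x | forall i, Mi i (x i)].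
Definition Mhat_top : set (set (nat -> R)) :=
  generated Mhat [set W | exists i (V : set R), V `<=` Mi i /\
                            W = [set x | V (x i)]].

Definition in_l1 (x : nat -> R) : Prop :=
  (\sum_(i <oo) (`|x i|)%:E < +oo)%E.
Definition l1_dist (x y : nat -> R) : R :=
  fine (\sum_(i <oo) (`|x i - y i|)%:E)%E.
Definition Mset : set (nat -> R) := [set x | Mhat x /\ in_l1 x].
Definition M_top : set (set (nat -> R)) := metric_top Mset l1_dist.

Definition f (x : nat -> R) (k a b : nat) : bool :=
  if \sum_(a <= i < a + b + 1) x i <= 2 ^- k then false else true.

(* domain of f as a QCB space: the sequentialisation of the product topology *)
Definition fdom : set ((nat -> R) * nat * (nat * nat)) := Mhat `*` setT `*` setT.
Definition fdom_top : set (set ((nat -> R) * nat * (nat * nat))) :=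
  seqz fdom (prod_top (Mhat `*` setT) (prod_top Mhat Mhat_top setT (discrete setT))
                      setT (discrete setT)).
Definition f_unc (p : (nat -> R) * nat * (nat * nat)) : bool :=
  f p.1.1 p.1.2 p.2.1 p.2.2.

End Spaces.

(* The countable fan F : N^2 ∪ {(oo,oo)}; None stands for (oo,oo). *)
Definition Fan := option (nat * nat).
Definition fan_dist {R : realType} (p q : Fan) : R :=
  match p, q with
  | None, None => 0
  | Some (a, _), None => 2 ^- a
  | None, Some (a, _) => 2 ^- a
  | Some (a, b), Some (a', b') =>
      if (a, b) == (a', b') then 0 else Num.max (2 ^- a) (2 ^- a')
  end.
Definition Fan_top {R : realType} : set (set Fan) :=
  metric_top setT (@fan_dist R).

(* N x F in QCB: sequentialisation of the product topology *)
Definition NF_top {R : realType} : set (set (nat * Fan)) :=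
  seqz setT (prod_top setT (discrete setT) setT (@Fan_top R)).

Definition two_top : set (set bool) := discrete setT.
Definition CNF {R : realType} : set (nat * Fan -> bool) :=
  cont setT (@NF_top R) setT two_top.
Definition CNF_top {R : realType} : set (set (nat * Fan -> bool)) :=
  seqz (@CNF R) (compact_open setT (@NF_top R) setT two_top).

Definition g {R : realType} (y : nat -> R) : nat * Fan -> bool :=
  fun p => match p.2 with
           | Some (a, b) => f y p.1 a b
           | None => false
           end.

From Pilot Require Import Defs.
From mathcomp Require Import all_boot all_order all_algebra.
From mathcomp Require Import all_classical all_reals all_analysis.
From mathcomp Require Import zify lra.
Import Order.TTheory GRing.Theory Num.Theory.
Local Open Scope classical_set_scope.
Local Open Scope ring_scope.

(* Each topology in the statement is sequentialised or metric, so every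
   continuity claim reduces to sequences: into a discrete space it suffices
   that images of convergent sequences are eventually constant, and out of a
   metric space it suffices to send convergent sequences to convergent ones.

   [f x k a b] only reads [k], [a], [b] and the coordinates [x a .. x (a+b)],
   which are eventually fixed along a sequence converging in the product of
   the discrete spaces [M_i].  A sequence converging to [(k, oo)] in
   [N x F] eventually has first coordinate [k] and [a] arbitrarily large;
   as [y] is summable, its block sums starting far out are below [2^-k], so
   [g y] is eventually [0].

   For [g] itself, a compact [K] of [N x F] has bounded first coordinates
   [k < j0] and, for every [A], bounded [a + b] on its points with [a < A].
   Pick [A] such that the block sums of [y] from [A] on are below
   [2^-j0 / 2].  An [l1]-perturbation [z] of [y] that is small enough agrees
   with [y] on the resulting initial segment (two points of [M_i] at distance
   less than [2^-i] coincide) and moves block sums by less than [2^-j0 / 2],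
   so [g z = g y] on [K]: this is convergence in the compact-open topology. *)

Lemma near_inftyP (P : nat -> Prop) :
  (\forall n \near \oo, P n) <-> exists N, forall n, (N <= n)%N -> P n.
Proof. by split=> [[N _ HN]|[N HN]]; exists N. Qed.

Lemma near_all_seq {T : Type} {F : set_system T} {FF : Filter F} {X : eqType}
    {s : seq X} {P : X -> T -> Prop} :
  (forall x, x \in s -> \forall t \near F, P x t) ->
  \forall t \near F, forall x, x \in s -> P x t.
Proof.
elim: s => [|x s IH] H; first exact: nearW.
have Hs : \forall t \near F, forall y, y \in s -> P y t.
  by apply: IH => y ys; apply: H; rewrite inE ys orbT.
apply: filterS (filterI (H x (mem_head _ _)) Hs) => t [Pxt Pst] y.
by rewrite inE => /predU1P[->|/Pst].
Qed.

Lemma generated_subbasicI {T : Type} (A : set T) (B : set (set T)) U :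
  B U -> generated A B (A `&` U).
Proof.
move=> BU; split=> [x []//|x [_ Ux]]; exists [:: U]; split.
- by move=> V; rewrite inE => /eqP ->.
- by move=> z Az /(_ U (mem_head _ _)).
Qed.

Lemma converges_generated {T : Type} (A : set T) (B : set (set T)) u p :
  (forall n, A (u n)) ->
  (forall V, B V -> V p -> \forall n \near \oo, V (u n)) ->
  converges (generated A B) u p.
Proof.
move=> Au Bu U [_ HU] Up; apply/near_inftyP.
have [s [sB sU]] := HU p Up.
near=> n; apply: sU; first exact: Au.
by near: n; apply: near_all_seq => V /sB [BV Vp]; exact: Bu.
Unshelve. all: by end_near.
Qed.

Lemma prod_top_rect {S T : Type} (A : set S) OA (B : set T) OB U V :
  U `<=` A -> V `<=` B -> OA U -> OB V -> prod_top A OA B OB (U `*` V).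
Proof.
move=> UA VB OU OV.
have /setIidr <- : U `*` V `<=` A `*` B by move=> [x y] [/UA ? /VB ?].
by apply: generated_subbasicI; exists U => //; exists V.
Qed.

Lemma seqz_open {T : Type} (A : set T) O U : U `<=` A -> O U -> seqz A O U.
Proof. by move=> UA OU; split=> // u p _ _ /(_ U OU) cv /cv. Qed.

Lemma cont_seqz_discrete {S T : Type} (A : set S) OA (B : set T) (h : S -> T) :
  (forall x, A x -> B (h x)) ->
  (forall u p, (forall n, A (u n)) -> A p -> converges OA u p ->
    \forall n \near \oo, h (u n) = h p) ->
  cont A (seqz A OA) B (discrete B) h.
Proof.
move=> hAB hu; split=> // V _; split; first by move=> x [].
move=> u p Au Ap cv [_ Vp]; apply/near_inftyP.
by apply: filterS (hu u p Au Ap cv) => n e; split; rewrite // /preimage /= e.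
Qed.

Lemma compact_in_chain {T : Type} (A : set T) O K (U : nat -> set T) :
  compact_in A O K -> (forall j, O (U j)) ->
  (forall i j, (i <= j)%N -> U i `<=` U j) -> K `<=` \bigcup_j U j ->
  exists j, K `<=` U j.
Proof.
move=> [_ cK] OU homU KU.
have [|x /KU [j _ Ujx]|s [sU cover]] := cK (range U).
- by move=> _ [j _ <-].
- by exists (U j) => //; exists j.
have : \forall J \near \oo, forall V, V \in s -> V `<=` U J.
  apply: near_all_seq => V /sU [j _ <-]; apply/near_inftyP.
  by exists j; exact: homU.
case/near_inftyP => J /(_ J (leqnn J)) sUJ; exists J.
by move=> x /cover [V Vs Vx]; exact: sUJ V Vs x Vx.
Qed.

Lemma cont_metric_seqz {R : realType} {S T : Type} (A : set S)
    (d : S -> S -> R) (B : set T) OB (h : S -> T) :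
  (forall x, A x -> B (h x)) ->
  (forall u p, (forall n, A (u n)) -> A p ->
    (forall e, 0 < e -> \forall n \near \oo, d p (u n) < e) ->
    converges OB (h \o u) (h p)) ->
  cont A (metric_top A d) B (seqz B OB) h.
Proof.
move=> hAB hu; split=> // V [_ HV]; split; first by move=> x [].
move=> p [Ap Vp]; apply: contrapT => nE.
(* Witnesses at distance < 1/(n+1) from [p] outside the preimage of [V]
   would contradict the sequential openness of [V]. *)
have [u Hu] : {u : nat -> S &
    forall n, A (u n) /\ d p (u n) < n.+1%:R^-1 /\ ~ V (h (u n))}.
  apply: (choice (P := fun n x => A x /\ d p x < n.+1%:R^-1 /\ ~ V (h x))).
  move=> n; apply: contrapT => nu; apply: nE; exists n.+1%:R^-1 => [|x Ax dx].
    by rewrite invr_gt0 ltr0n.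
  by split=> //; apply: contrapT => nVx; apply: nu; exists x.
have dpu e : 0 < e -> \forall n \near \oo, d p (u n) < e.
  move=> e0; near=> n; apply: lt_trans (Hu n).2.1 _.
  by near: n; exact: (near_infty_natSinv_lt (PosNum e0)).
have [N HN] := HV (h \o u) (h p) (fun n => hAB _ (Hu n).1) (hAB _ Ap)
  (hu u p (fun n => (Hu n).1) Ap dpu) Vp.
exact: (Hu N).2.2 (HN N (leqnn N)).
Unshelve. all: by end_near.
Qed.

Section Dyadic.
Context {R : realFieldType}.

Lemma exp2V_gt0 n : 0 < (2 : R) ^- n.
Proof. by rewrite invr_gt0 exprn_gt0. Qed.

Lemma ler_exp2V m n : ((2 : R) ^- m <= 2 ^- n) = (n <= m)%N.
Proof. by rewrite lef_pV2 ?posrE ?exprn_gt0// ler_eXn2l// ltr1n. Qed.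

Lemma ltr_exp2V m n : ((2 : R) ^- m < 2 ^- n) = (n < m)%N.
Proof. by rewrite ltf_pV2 ?posrE ?exprn_gt0// ltr_eXn2l// ltr1n. Qed.

End Dyadic.

Section Grid.
Context {R : realType}.

Lemma Mi_ge0 i (r : R) : Mi i r -> 0 <= r.
Proof. by case=> j _ ->; rewrite mulr_ge0// ltW// exp2V_gt0. Qed.

Lemma Mi_dist_lt_eq i (r s : R) :
  Mi i r -> Mi i s -> `|r - s| < 2 ^- i -> r = s.
Proof.
case=> j _ -> [j' _ ->]; rewrite -mulrBl normrM (ger0_norm (ltW (exp2V_gt0 i))).
rewrite -{2}[2 ^- i]mul1r ltr_pM2r ?exp2V_gt0//.
rewrite ltr_distl ltrBlDr !natr1 !ltr_nat => /andP[? ?].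
by congr (_%:R / _); lia.
Qed.

Lemma Mset_ge0 (x : nat -> R) i : Mset x -> 0 <= x i.
Proof. by case=> /(_ i) /Mi_ge0. Qed.

Lemma sum_le_nneseries (u : nat -> R) a b : (forall i, 0 <= u i) ->
  ((\sum_(a <= i < b) u i)%:E <= \sum_(i <oo) (u i)%:E)%E.
Proof.
move=> u0; rewrite -sumEFin.
apply: (le_trans (@nneseries_lim_ge R _ xpredT a b _)) => [i _ _|].
  by rewrite lee_fin.
rewrite (nneseries_split 0 a) ?add0n => [|i _]; last by rewrite lee_fin.
by apply: leeDr; rewrite sume_ge0// => i _; rewrite lee_fin.
Qed.

Lemma nneseries_tail_small (u : nat -> R) e : (forall i, 0 <= u i) ->
  (\sum_(i <oo) (u i)%:E < +oo)%E -> 0 < e ->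
  \forall a \near \oo, forall b, \sum_(a <= i < b) u i < e.
Proof.
move=> u0 fin e0.
have : \forall a \near \oo, (\sum_(a <= i <oo) (u i)%:E < e%:E)%E.
  apply: (@nneseries_tail_cvg R (fun i => (u i)%:E) xpredT fin (fun i _ => u0 i)
    [set r | (r < e%:E)%E]).
  apply: open_nbhs_nbhs; split; first exact: open_ereal_lt_ereal.
  by rewrite /= lte_fin.
apply: filterS => a tail_lt b; rewrite -lte_fin -sumEFin.
apply: le_lt_trans tail_lt.
by apply: nneseries_lim_ge => i _ _; rewrite lee_fin.
Qed.

Lemma Mset_tail_small {y : nat -> R} {e} : Mset y -> 0 < e ->
  \forall a \near \oo, forall b, \sum_(a <= i < b) y i < e.
Proof.
move=> My e0; have [_ y_l1] := My.
apply: filterS (nneseries_tail_small _ _ (fun i => normr_ge0 (y i)) y_l1 e0).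
move=> a sum_lt b.
by under eq_bigr => i _ do rewrite -(ger0_norm (Mset_ge0 _ i My)).
Qed.

Lemma l1_dist_series_fin (x y : nat -> R) : in_l1 x -> in_l1 y ->
  (\sum_(i <oo) (`|x i - y i|)%:E < +oo)%E.
Proof.
move=> x_l1 y_l1.
pose v i := ((`|x i|)%:E + (`|y i|)%:E)%E.
apply: (le_lt_trans (@lee_nneseries R _ v xpredT 0 _ _)).
- by move=> i _ _; rewrite lee_fin.
- by move=> i _; rewrite /v -EFinD lee_fin ler_normB.
by rewrite /v nneseriesD ?lte_add_pinfty// => i _ _; rewrite lee_fin.
Qed.

Lemma sum_le_l1_dist (x y : nat -> R) a b : in_l1 x -> in_l1 y ->
  \sum_(a <= i < b) `|x i - y i| <= l1_dist x y.
Proof.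
move=> x_l1 y_l1; rewrite /l1_dist -lee_fin fineK.
  exact: sum_le_nneseries.
rewrite ge0_fin_numE ?l1_dist_series_fin//.
by apply: nneseries_ge0 => i _ _; rewrite lee_fin.
Qed.

Lemma sum_le_sumD_l1_dist (y z : nat -> R) a b : in_l1 y -> in_l1 z ->
  \sum_(a <= i < b) z i <= \sum_(a <= i < b) y i + l1_dist y z.
Proof.
move=> y_l1 z_l1.
apply: le_trans (lerD (lexx _) (sum_le_l1_dist _ _ a b y_l1 z_l1)).
rewrite -big_split /=; apply: ler_sum_nat => i _.
by rewrite distrC; have := ler_norm (z i - y i); lra.
Qed.

Lemma Mset_l1_dist_lt_eq (x y : nat -> R) m : Mset x -> Mset y ->
  l1_dist x y < 2 ^- m -> forall i, (i <= m)%N -> x i = y i.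
Proof.
move=> [Mx x_l1] [My y_l1] dxy i im; apply: Mi_dist_lt_eq (Mx i) (My i) _.
apply: le_lt_trans (lt_le_trans dxy _); last by rewrite ler_exp2V.
by have := sum_le_l1_dist _ _ i i.+1 x_l1 y_l1; rewrite big_nat1.
Qed.

End Grid.

Lemma f_eq_on_block (R : realType) (x y : nat -> R) k a b :
  (forall i, (a <= i < a + b + 1)%N -> x i = y i) -> f x k a b = f y k a b.
Proof. by move=> xy; rewrite /f (eq_big_nat _ _ xy). Qed.

Section Fan.
Variable R : realType.

Local Notation NF_prod :=
  (prod_top setT (@discrete nat setT) setT (@Fan_top R)).

Lemma fan_dist_Some_lt a b (z : Fan) :
  @fan_dist R (Some (a, b)) z < 2 ^- a -> z = Some (a, b).
Proof.
case: z => [[a' b']|] /=; last by rewrite ltxx.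
by case: eqP => [[-> ->]|_] //; rewrite gt_max ltxx.
Qed.

Lemma fan_dist_None_lt A (z : Fan) : @fan_dist R None z < 2 ^- A ->
  forall a b, z = Some (a, b) -> (A < a)%N.
Proof. by move=> + a b zab; rewrite zab /= ltr_exp2V. Qed.

Lemma Fan_top_open (W : set Fan) :
  (W None -> exists2 e : R, 0 < e & forall z, fan_dist None z < e -> W z) ->
  @Fan_top R W.
Proof.
move=> WNone; split=> // [[[a b]|]] Wz; last first.
  by have [e e0 We] := WNone Wz; exists e => // z _; exact: We.
by exists (2 ^- a) => [|z _ /fan_dist_Some_lt ->]; first exact: exp2V_gt0.
Qed.

Lemma NF_converges_Some {u k a b} : converges NF_prod u (k, Some (a, b)) ->
  \forall n \near \oo, u n = (k, Some (a, b)).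
Proof.
move=> cv; apply/near_inftyP.
have [||N uN] := cv ([set k] `*` [set Some (a, b)]) => //.
  by apply: prod_top_rect => //; apply: Fan_top_open.
by exists N => n /uN; case: (u n) => k' z [/= -> ->].
Qed.

Lemma NF_converges_None A {u k} : converges NF_prod u (k, None) ->
  \forall n \near \oo, (u n).1 = k /\
    forall a b, (u n).2 = Some (a, b) -> (A < a)%N.
Proof.
move=> cv; apply/near_inftyP.
have [||N uN] := cv ([set k] `*` [set z | @fan_dist R None z < 2 ^- A]).
- apply: prod_top_rect => //; apply: Fan_top_open => _.
  by exists (2 ^- A) => //; exact: exp2V_gt0.
- by split => //=; exact: exp2V_gt0.
by exists N => n /uN [-> /fan_dist_None_lt].
Qed.

Lemma g_cont (y : nat -> R) :
  Mset y -> cont setT (@NF_top R) setT two_top (g y).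
Proof.
move=> My; apply: cont_seqz_discrete => // u [k [[a b]|]] _ _ cv.
  by apply: filterS (NF_converges_Some cv) => n ->.
have /near_inftyP [A tail_lt] := Mset_tail_small My (exp2V_gt0 k).
apply: filterS (NF_converges_None A cv) => n.
case: (u n) => k' [[a b]|] [/= -> Aa] //.
by rewrite /g /f /= ifT // ltW // tail_lt // ltnW // (Aa a b).
Qed.

Lemma f_cont : cont (@fdom R) (@fdom_top R) setT two_top (@f_unc R).
Proof.
apply: cont_seqz_discrete => // u [[x k] [a b]] _ [[Mx _] _] cv.
pose O (i : nat) :=
  ((@Mhat R `&` [set w | w i = x i]) `*` [set k]) `*` [set (a, b)].
have : \forall n \near \oo, forall i, i \in iota 0 (a + b + 1) -> O i (u n).
  apply: (near_all_seq (P := fun i n => O i (u n))) => i _.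
  apply/near_inftyP; have [||N uN] := cv (O i); [|by []|by exists N].
  apply: prod_top_rect => //; first by move=> [w k'] [[Mw _] _].
  apply: prod_top_rect => //.
  by apply: generated_subbasicI; exists i, [set x i]; split=> // r ->.
apply: filterS => n; case: (u n) => [[w k'] [a' b']] Ou.
have /Ou [[_ /= ->] /= [-> ->]] : 0%N \in iota 0 (a + b + 1).
  by rewrite mem_iota; lia.
apply: f_eq_on_block => i /andP[_ ib].
by have /Ou [[[_ /= ->] _] _] : i \in iota 0 (a + b + 1) by rewrite mem_iota.
Qed.

Definition fan_box (A j : nat) : set (nat * Fan) :=
  [set k | (k < j)%N] `*`
  [set z | forall a b, z = Some (a, b) -> (a < A)%N -> (a + b < j)%N].

Lemma fan_box_open A j : @NF_top R (fan_box A j).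
Proof.
apply: seqz_open => //; apply: prod_top_rect => //; apply: Fan_top_open => _.
exists (2 ^- A) => [|z /fan_dist_None_lt AzA a b /AzA]; first exact: exp2V_gt0.
by lia.
Qed.

Lemma compact_fan_box A {K} : compact_in setT (@NF_top R) K ->
  exists j, K `<=` fan_box A j.
Proof.
move=> cK; apply: compact_in_chain cK _ _ _ => [j|i j ij [k z] [kj zj]|[k z] _].
- exact: fan_box_open.
- move: kj zj => /= kj zj.
  by split=> [|a b zab aA] /=; [|have := zj a b zab aA]; lia.
exists (k.+1 + (if z is Some (a, b) then (a + b).+1 else 0))%N => //.
by split=> [/=|a b /= -> _]; lia.
Qed.

Section ConvergenceOnCompacts.
Variables (y : nat -> R) (ys : nat -> nat -> R).
Hypotheses (My : Mset y) (Mys : forall n, Mset (ys n)).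
Hypothesis ys_cvg :
  forall e, 0 < e -> \forall n \near \oo, l1_dist y (ys n) < e.

Lemma g_eq_on_compact {K} : compact_in setT (@NF_top R) K ->
  \forall n \near \oo, forall z, K z -> g (ys n) z = g y z.
Proof.
move=> cK; have [j0 K_j0] := compact_fan_box 0 cK.
have c0 : 0 < 2 ^- j0 / 2 :> R by rewrite divr_gt0 ?exp2V_gt0.
have /near_inftyP [A tail_lt] := Mset_tail_small My c0.
have [j1 K_j1] := compact_fan_box A cK.
have : 0 < Num.min (2 ^- j0 / 2) (2 ^- j1) :> R by rewrite lt_min c0 exp2V_gt0.
move=> /ys_cvg; apply: filterS => n; rewrite lt_min => /andP[dy_c dy_j1].
move=> [k [[a b]|]] // Kz.
rewrite /g /=; case: (ltnP a A) => [aA|Aa].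
  apply: f_eq_on_block => i /andP[_ ib]; symmetry.
  have /= [_ /(_ a b erefl aA) abj1] := K_j1 _ Kz.
  by apply: Mset_l1_dist_lt_eq My (Mys n) dy_j1 _ _; lia.
have /= [kj0 _] := K_j0 _ Kz.
have ck : 2 ^- j0 <= 2 ^- k :> R by rewrite ler_exp2V ltnW.
have sy := tail_lt a Aa (a + b + 1)%N.
have sys := sum_le_sumD_l1_dist _ _ a (a + b + 1)%N My.2 (Mys n).2.
by rewrite /f !ifT //; apply: ltW; apply: lt_le_trans ck; lra.
Qed.

Lemma g_converges :
  converges (Defs.compact_open setT (@NF_top R) setT two_top) (g \o ys) (g y).
Proof.
apply: converges_generated => [n|_ [K [V [cK [_ ->]]]] gyV].
  exact: g_cont.
apply: filterS (g_eq_on_compact cK) => n ysK z Kz.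
by rewrite /= ysK //; exact: gyV.
Qed.

End ConvergenceOnCompacts.

End Fan.

Theorem lemma3p2 (R : realType) :
  (forall y : nat -> R, Mset y -> cont setT (@NF_top R) setT two_top (g y)) /\
  cont (@fdom R) (@fdom_top R) setT two_top (@f_unc R) /\
  cont (@Mset R) (@M_top R) (@CNF R) (@CNF_top R) (@g R).
Proof.
split; first exact: g_cont.
split; first exact: f_cont.
apply: cont_metric_seqz => [y /g_cont //|ys y Mys My ys_cvg].
exact: g_converges.
Qed.
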